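(* Let $G$ be a countable vertex set and let $c,b$ be conductance functions on $G$ with $b_{xy}\le c_{xy}$ for all $x,y$, such that $(G,c)$ and $(G,b)$ are connected locally finite networks. Let $\mathcal I:\mathcal H_{\mathcal E_c}\to\mathcal H_{\mathcal E_b}$ be the inclusion map and $\mathcal I^*:\mathcal H_{\mathcal E_b}\to\mathcal H_{\mathcal E_c}$ its Hilbert-space adjoint. Then $\mathcal I(\mathrm{Fin}_c)\subseteq \mathrm{Fin}_b$ and $\mathcal I^*(\mathrm{Harm}_b)\subseteq \mathrm{Harm}_c$.
   Context: A conductance function on a countable set $G$ is a symmetric map $c:G\times G\to[0,\infty)$ with $c_{xx}=0$; $x\sim y$ iff $c_{xy}>0$; locally finite means finitely many neighbours per vertex; connected means any two vertices are joined by a finite path of adjacent vertices. The energy is $\mathcal E_c(u,v)=\frac12\sum_{x,y}c_{xy}\overline{(u(x)-u(y))}(v(x)-v(y))$, and $\mathcal H_{\mathcal E_c}$ is the space of functions $u:G\to\mathbb C$ with $\mathcal E_c(u)<\infty$ modulo constants, with inner product $\mathcal E_c(u,v)$ (a Hilbert space). The Laplacian is $(\Delta_c v)(x)=\sum_{y\sim x}c_{xy}(v(x)-v(y))$. $\delta_x$ denotes the indicator of $\{x\}$ (an element of $\mathcal H_{\mathcal E_c}$), $\mathrm{Fin}_c$ is the closure in $\mathcal H_{\mathcal E_c}$ of $\mathrm{span}\{\delta_x\}_{x\in G}$, and $\mathrm{Harm}_c=\{v\in\mathcal H_{\mathcal E_c}:\Delta_c v(x)=0\ \forall x\in G\}$.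 Analogous notation with $b$ in place of $c$. *)

From HB Require Import structures.
From mathcomp Require Import all_boot all_order all_algebra.
From mathcomp Require Import all_classical all_reals.
From mathcomp Require Import ereal esum.
From mathcomp Require Import complex.

Set Implicit Arguments.
Unset Strict Implicit.
Unset Printing Implicit Defensive.
Import Order.TTheory GRing.Theory Num.Theory.
Local Open Scope classical_set_scope.
Local Open Scope ring_scope.
Local Open Scope complex_scope.

Section Networks.
Variables (R : realType) (G : countType).

Definition conductance (c : G -> G -> R) : Prop :=
  [/\ forall x y, c x y = c y x, forall x y, 0 <= c x y & forall x, c x x = 0].

Definition adj (c : G -> G -> R) : rel G := fun x y => 0 < c x y.

Definition locally_finite (c : G -> G -> R) : Prop :=
  forall x, finite_set [set y | adj c x y].

Definition connected_net (c : G -> G -> R) : Prop :=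
  forall x y, exists s : seq G, path (adj c) x s /\ last x s = y.

Definition normsq (z : R[i]) : R := complex.Re z ^+ 2 + complex.Im z ^+ 2.

Definition energy (c : G -> G -> R) (u : G -> R[i]) : \bar R :=
  ((2^-1)%:E * \esum_(p in [set: G * G]) (c p.1 p.2 * normsq (u p.1 - u p.2))%:E)%E.

Definition finite_energy (c : G -> G -> R) (u : G -> R[i]) : Prop :=
  (energy c u < +oo)%E.

Definition rsum (T : choiceType) (D : set T) (g : T -> R) : R :=
  fine (\esum_(t in D) (Num.max (g t) 0)%:E)
  - fine (\esum_(t in D) (Num.max (- g t) 0)%:E).

Definition csum (T : choiceType) (D : set T) (f : T -> R[i]) : R[i] :=
  Complex (rsum D (fun t => complex.Re (f t))) (rsum D (fun t => complex.Im (f t))).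

Definition energy_form (c : G -> G -> R) (u v : G -> R[i]) : R[i] :=
  (2^-1)%:C * csum [set: G * G]
    (fun p => (c p.1 p.2)%:C * (conjc (u p.1 - u p.2) * (v p.1 - v p.2))).

Definition dirac_fn (x : G) : G -> R[i] := fun y => if y == x then 1 else 0.

Definition in_span_dirac (v : G -> R[i]) : Prop :=
  exists (s : seq G) (a : G -> R[i]),
    v = fun y => \sum_(x <- s) a x * dirac_fn x y.

(** Fin_c: closure in H_{E_c} of span{delta_x}.  Elements of H_{E_c} are
    represented by finite-energy functions (energy is invariant under adding
    constants, so the closure condition does not depend on the representative). *)
Definition in_Fin (c : G -> G -> R) (u : G -> R[i]) : Prop :=
  finite_energy c u /\
  forall eps : R, 0 < eps ->
    exists v, in_span_dirac v /\ (energy c (fun y => (u y - v y)%R) < eps%:E)%E.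

Definition laplacian (c : G -> G -> R) (v : G -> R[i]) (x : G) : R[i] :=
  \sum_(y \in [set y | adj c x y]) ((c x y)%:C * (v x - v y)).

Definition in_Harm (c : G -> G -> R) (v : G -> R[i]) : Prop :=
  finite_energy c v /\ forall x, laplacian c v x = 0.

(** w represents I^* v, where I : H_{E_c} -> H_{E_b} is the inclusion:
    w in H_{E_c} and E_c(w, u) = E_b(v, I u) for all u in H_{E_c}. *)
Definition is_adjoint_incl_image (c b : G -> G -> R) (v w : G -> R[i]) : Prop :=
  finite_energy c w /\
  forall u, finite_energy c u -> energy_form c w u = energy_form b v u.

End Networks.

From HB Require Import structures.
From mathcomp Require Import all_boot all_order all_algebra.
From mathcomp Require Import all_classical all_reals.
From mathcomp Require Import ereal esum.
From mathcomp Require Import complex.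
From mathcomp Require Import finmap.
Set Implicit Arguments.
Unset Strict Implicit.
Unset Printing Implicit Defensive.
Import Order.TTheory GRing.Theory Num.Theory.
Local Open Scope classical_set_scope.
Local Open Scope ring_scope.
Local Open Scope complex_scope.

(** The energy is monotone in the conductance, so every finite-energy
    approximation by finitely supported functions for [c] is one for [b].
    For the adjoint: when the neighbourhood of [x] is finite, [delta_x] has
    finite energy and [E_d(u, delta_x)] is the conjugate of [(Delta_d u)(x)];
    testing [E_c(I^* v, u) = E_b(v, u)] against [u = delta_x] therefore gives
    [(Delta_c I^* v)(x) = (Delta_b v)(x) = 0]. *)

Section FiniteSupportSums.
Variables (R : realType) (T : choiceType) (r : seq T).
Hypothesis r_uniq : uniq r.

Lemma esum_finite_support (g : T -> R) :
  (forall t, 0 <= g t) -> (forall t, t \notin r -> g t = 0) ->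
  (\esum_(t in [set: T]) (g t)%:E = (\sum_(t <- r) g t)%:E)%E.
Proof.
move=> g_ge0 g_out.
rewrite (eq_esum (b := fun t => if t \in [set` r] then (g t)%:E else 0%E));
  last by move=> t _; case: ifPn => //; rewrite mem_setE => /g_out ->.
rewrite -esum_mkcond esum_fset// => [|t _]; last by rewrite lee_fin.
by rewrite -fsbig_seq// sumEFin.
Qed.

Lemma rsum_finite_support (g : T -> R) : (forall t, t \notin r -> g t = 0) ->
  rsum [set: T] g = \sum_(t <- r) g t.
Proof.
move=> g_out; rewrite /rsum !esum_finite_support => [|t|t|t|t];
  rewrite ?le_max ?lexx ?orbT //; try by move/g_out ->; rewrite ?oppr0 maxxx.
rewrite /= -sumrB; apply: eq_bigr => t _.
case: (leP 0 (g t)) => [g_ge0|g_lt0].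
  by rewrite (max_idPr _) ?subr0 // oppr_le0.
by rewrite (max_idPl _) ?sub0r ?opprK // oppr_ge0 ltW.
Qed.

End FiniteSupportSums.

Lemma csum_finite_support (R : realType) (T : choiceType) (r : seq T)
    (f : T -> R[i]) :
  uniq r -> (forall t, t \notin r -> f t = 0) ->
  csum [set: T] f = \sum_(t <- r) f t.
Proof.
move=> r_uniq f_out.
rewrite /csum !(rsum_finite_support r_uniq) => [|t /f_out ->//|t /f_out ->//].
elim: r {r_uniq f_out} => [|t s IH]; first by rewrite !big_nil.
by rewrite !big_cons -IH; case: (f t).
Qed.

Definition star_edges (T : Type) (x : T) (s : seq T) : seq (T * T) :=
  [seq (x, y) | y <- s] ++ [seq (y, x) | y <- s].

Lemma star_edges_uniq (T : eqType) (x : T) (s : seq T) :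
  uniq s -> x \notin s -> uniq (star_edges x s).
Proof.
move=> s_uniq x_notin.
rewrite cat_uniq !map_inj_uniq // => [|a b [] //|a b [] //].
rewrite s_uniq andbT; apply/hasPn => _ /mapP [y ys ->].
by apply/negP => /mapP [z _ [ezx _]]; move: x_notin; rewrite -ezx ys.
Qed.

Section EnergyOfConductances.
Variables (R : realType) (G : countType).

Lemma energy_le_conductance (c b : G -> G -> R) (f : G -> R[i]) :
  (forall x y, 0 <= b x y) -> (forall x y, b x y <= c x y) ->
  (energy b f <= energy c f)%E.
Proof.
move=> b_ge0 b_le_c; apply: lee_wpmul2l; first by rewrite lee_fin invr_ge0.
apply: le_esum => p _; rewrite lee_fin ler_wpM2r //.
by rewrite /normsq addr_ge0 // sqr_ge0.
Qed.

Lemma in_Fin_le_conductance (c b : G -> G -> R) (u : G -> R[i]) :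
  (forall x y, 0 <= b x y) -> (forall x y, b x y <= c x y) ->
  in_Fin c u -> in_Fin b u.
Proof.
move=> b_ge0 b_le_c [u_fin u_approx].
have energy_le f := energy_le_conductance f b_ge0 b_le_c.
split=> [|eps eps_gt0]; first exact: le_lt_trans (energy_le u) u_fin.
have [v [v_span uv_lt]] := u_approx eps eps_gt0.
by exists v; split => //; apply: le_lt_trans (energy_le _) uv_lt.
Qed.

End EnergyOfConductances.

Section DiracAtFiniteVertex.
Variables (R : realType) (G : countType) (d : G -> G -> R) (x : G).
Hypothesis d_cond : conductance d.
Hypothesis nbrs_finite : finite_set [set y | adj d x y].

Let nbrs : seq G := fset_set [set y | adj d x y].

Let mem_nbrs y : (y \in nbrs) = adj d x y.
Proof. by rewrite /nbrs in_fset_set // mem_setE. Qed.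

Lemma conductance_nonadj y : ~~ adj d x y -> d x y = 0.
Proof.
have [_ d_ge0 _] := d_cond.
by rewrite /adj -leNgt => d_le0; apply/eqP; rewrite eq_le d_le0 d_ge0.
Qed.

Let x_notin_nbrs : x \notin nbrs.
Proof. by have [_ _ dxx] := d_cond; rewrite mem_nbrs /adj dxx ltxx. Qed.

Let notin_star_edges p : p \notin star_edges x nbrs ->
  d p.1 p.2 = 0 \/ dirac_fn R x p.1 = dirac_fn R x p.2.
Proof.
have [d_sym _ _] := d_cond.
case: p => a b; rewrite mem_cat negb_or => /andP [xb_notin bx_notin] /=.
have [eax|ax] := eqVneq a x; have [ebx|bx] := eqVneq b x.
- by right; rewrite eax ebx.
- left; rewrite eax; apply: conductance_nonadj; rewrite -mem_nbrs.
  by apply: contra xb_notin => b_in; apply/mapP; exists b; rewrite ?eax.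
- left; rewrite ebx d_sym; apply: conductance_nonadj; rewrite -mem_nbrs.
  by apply: contra bx_notin => a_in; apply/mapP; exists a; rewrite ?ebx.
- by right; rewrite /dirac_fn (negbTE ax) (negbTE bx).
Qed.

Let laplacian_nbrs (v : G -> R[i]) :
  laplacian d v x = \sum_(y <- nbrs) (d x y)%:C * (v x - v y).
Proof. exact: fsbig_finite. Qed.

Lemma finite_energy_dirac : finite_energy d (dirac_fn R x).
Proof.
have [_ d_ge0 _] := d_cond.
rewrite /finite_energy /energy (@esum_finite_support _ _ (star_edges x nbrs)).
- by rewrite -EFinM ltry.
- by apply: star_edges_uniq; rewrite ?fset_uniq.
- by move=> p; rewrite mulr_ge0 // addr_ge0 // sqr_ge0.
move=> p /notin_star_edges [->|->]; first by rewrite mul0r.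
by rewrite subrr /normsq /= expr0n /= addr0 mulr0.
Qed.

Lemma energy_form_dirac (u : G -> R[i]) :
  energy_form d u (dirac_fn R x) = conjc (laplacian d u x).
Proof.
have [d_sym _ _] := d_cond.
rewrite /energy_form (@csum_finite_support _ _ (star_edges x nbrs)); first last.
- move=> p /notin_star_edges [->|->]; first by rewrite mul0r.
  by rewrite subrr !mulr0.
- by apply: star_edges_uniq; rewrite ?fset_uniq.
have dirac_nbr y : y \in nbrs -> dirac_fn R x y = 0.
  move=> y_in; rewrite /dirac_fn; case: eqP y_in => // ->.
  by rewrite (negbTE x_notin_nbrs).
have dirac_x : dirac_fn R x x = 1 by rewrite /dirac_fn eqxx.
have half_twice : (2^-1 : R)%:C * 2 = 1.
  by rewrite -(rmorph_nat (real_complex R) 2) -rmorphM mulVf // pnatr_eq0.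
rewrite big_cat !big_map /= laplacian_nbrs rmorph_sum /=.
rewrite -[RHS]mul1r -half_twice -mulrA mulr_natl mulr2n.
congr (_ * (_ + _)); apply: eq_big_seq => y y_in;
  rewrite (dirac_nbr _ y_in) dirac_x rmorphM.
  by rewrite subr0 mulr1; congr (_ * _); rewrite -[LHS]conjc_real.
rewrite sub0r mulrN1 d_sym -rmorphN opprB.
by congr (_ * _); rewrite -[LHS]conjc_real.
Qed.

End DiracAtFiniteVertex.

Lemma adjoint_incl_harmonic (R : realType) (G : countType) (c b : G -> G -> R)
    (v w : G -> R[i]) :
  conductance c -> conductance b -> locally_finite c -> locally_finite b ->
  in_Harm b v -> is_adjoint_incl_image c b v w -> in_Harm c w.
Proof.
move=> c_cond b_cond c_lf b_lf [_ v_harm] [w_fin w_adj]; split=> // x.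
have := w_adj _ (finite_energy_dirac c_cond (c_lf x)).
rewrite !energy_form_dirac // v_harm conjc0.
by move/(congr1 conjc); rewrite conjcK conjc0.
Qed.

Theorem lemma3p4 (R : realType) (G : countType) (c b : G -> G -> R) :
  conductance c -> conductance b ->
  (forall x y, b x y <= c x y) ->
  connected_net c -> locally_finite c ->
  connected_net b -> locally_finite b ->
  (forall u : G -> R[i], in_Fin c u -> in_Fin b u) /\
  (forall v w : G -> R[i], in_Harm b v -> is_adjoint_incl_image c b v w ->
     in_Harm c w).
Proof.
move=> c_cond b_cond b_le_c _ c_lf _ b_lf; have [_ b_ge0 _] := b_cond.
split=> [u|v w]; first exact: in_Fin_le_conductance.
exact: adjoint_incl_harmonic.
Qed.
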